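(* There is an absolute constant $c>0$ such that for every integer $k\geq 2$, the largest number $N(k)$ of vertices of a connected integral circulant graph $G(n;S)$ of degree $k$ satisfies $$N(k)\leq \exp\left(c\sqrt{k\log\log(k+2)}\,\log k\right).$$
   Context: For an integer $n$ and a set $S\subseteq\{1,\dots,n-1\}$ such that $s\in S$ if and only if $n-s\in S$, the circulant graph $G(n;S)$ is the undirected graph on vertex set $\mathbb{Z}_n$ in which $i$ and $j$ are adjacent iff $i-j \bmod n\in S$; its degree is $\#S$. A graph is integral if all eigenvalues of its adjacency matrix are integers. *)

From mathcomp Require Import all_boot all_order all_algebra all_field.
From Stdlib Require Import Reals.
Set Implicit Arguments. Unset Strict Implicit. Unset Printing Implicit Defensive.
Import GRing.Theory Num.Theory.

(* residue of i - j modulo n, for i j : 'I_n *)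
Definition zdiff (n : nat) (i j : 'I_n) : nat := (i + (n - j)) %% n.

Definition conn_set (n : nat) (S : {set 'I_n}) : Prop :=
  (forall s : 'I_n, s \in S -> 0 < s) /\
  (forall s : 'I_n, (s \in S) = [exists t in S, val t == (n - s) %% n]).

Definition circ_adj (n : nat) (S : {set 'I_n}) : rel 'I_n :=
  fun i j => [exists s in S, val s == zdiff i j].

Definition circ_adjmx (n : nat) (S : {set 'I_n}) : 'M[algC]_n :=
  \matrix_(i, j) (if circ_adj S i j then (@GRing.one algC) else (@GRing.zero algC)).

Definition integral_graph (n : nat) (A : 'M[algC]_n) : Prop :=
  forall a : algC, eigenvalue A a -> a \in Num.int.

Definition connected_graph (T : finType) (e : rel T) : Prop :=
  forall x y : T, connect e x y.

Definition circ_bound (c : R) (k : nat) : R :=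
  exp (c * sqrt (INR k * ln (ln (INR k + 2))) * ln (INR k))%R.

(* Integrality forces S to be stable under multiplication by the units of Z/n:
   the eigenvalues sum_(s in S) w^(s j) are rational integers, hence fixed by the
   Galois automorphisms w |-> w^a, and Fourier inversion recovers the indicator of
   S from them.  Hence the class {t in S | gcd(t, n) = d} of any of its elements has
   at least prod_(p | n, p not dividing d) phi(n_p) elements, n_p being the p-part
   of n.  Connectivity means that every prime p | n fails to divide some such d,
   which gives sum_(p | n) (phi(n_p) - 1) <= k.  So every n_p is at most 2(k + 1),
   and as the primes dividing n are distinct, omega(n)^2 <= 4k; therefore
   n <= k^(3 omega(n)) <= exp(6 sqrt k log k), which is within the claimed bound
   for c = 30 because log log (k + 2) >= 1/5. *)

From Stdlib Require Import Reals Lra Psatz.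
From mathcomp Require Import all_boot all_order all_algebra all_field zify.
Set Implicit Arguments. Unset Strict Implicit. Unset Printing Implicit Defensive.
Import GRing.Theory Num.Theory.

Lemma coprime_modinv a n : coprime a n -> exists b, b * a = 1 %[mod n].
Proof.
have [->|a0] := posnP a.
  by rewrite /coprime gcd0n => /eqP ->; exists 0; rewrite !modn1.
case: (egcdnP n a0) => u v uaE _ /eqP co.
by exists u; rewrite uaE co -modnDml modnMl.
Qed.

Definition unit_stable m (S : {set 'I_m.+1}) : Prop :=
  forall a (t : 'I_m.+1), coprime a m.+1 -> t \in S -> inZp (a * t) \in S.

Section CirculantSpectrum.
Local Open Scope ring_scope.

Lemma sum_expr_eq0 (R : idomainType) (z : R) n :
  z ^+ n = 1 -> z != 1 -> \sum_(i < n) z ^+ i = 0.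
Proof.
move=> zn z1; apply/eqP; have := subrX1 z n.
by rewrite zn subrr => /esym/eqP; rewrite mulf_eq0 subr_eq0 (negbTE z1).
Qed.

Variables (m : nat) (S : {set 'I_m.+1}) (w : algC).
Hypothesis w_prim : m.+1.-primitive_root w.
Local Notation N := m.+1.

Lemma circ_adjE (i j : 'I_N) : circ_adj S i j = (i - j \in S).
Proof.
have zdiffE : zdiff i j = val (i - j) by rewrite /zdiff /= modnDmr.
apply/existsP/idP => [[s /andP[sS /eqP sE]]|ijS].
  by have -> : i - j = s by apply: val_inj; rewrite -zdiffE.
by exists (i - j); rewrite ijS zdiffE eqxx.
Qed.

Definition circ_eigval (j : nat) : algC := \sum_(s in S) w ^+ (s * j).

Lemma circ_eigvalP j : eigenvalue (circ_adjmx S) (circ_eigval j).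
Proof.
apply/eigenvalueP; exists (\row_(i < N) w ^+ (i * j)).
  apply/rowP => l; rewrite !mxE.
  under eq_bigr => i _ do rewrite !mxE circ_adjE.
  rewrite (reindex_inj (addIr l)) /= /circ_eigval mulr_suml [RHS]big_mkcond /=.
  apply: eq_bigr => s _; rewrite addrK.
  case: (s \in S); last by rewrite mulr0.
  by rewrite mulr1 -(prim_expr_mod w_prim) modnMml (prim_expr_mod w_prim) mulnDl exprD.
apply/eqP => /rowP /(_ ord0); rewrite !mxE mul0n expr0 => /eqP.
by rewrite oner_eq0.
Qed.

Lemma circ_eigval_mod j : circ_eigval (j %% N) = circ_eigval j.
Proof.
by apply: eq_bigr => s _; rewrite -(prim_expr_mod w_prim) modnMmr (prim_expr_mod w_prim).
Qed.

Lemma prim_root_orthogonality (s t : 'I_N) :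
  \sum_(j < N) w ^+ (s * j) * w ^- (t * j) = (s == t)%:R * N%:R.
Proof.
have w0 (i : nat) : w ^+ i != 0 by rewrite expf_eq0 (prim_root_eq0 w_prim) andbF.
under eq_bigr => j _ do rewrite !exprM -exprVn -exprMn.
have [<-|st] := eqVneq s t.
  under eq_bigr => j _ do rewrite divff // expr1n.
  by rewrite sumr_const card_ord mul1r.
rewrite mul0r; apply: sum_expr_eq0.
  by rewrite exprMn exprVn -!exprM !(mulnC _ N) !exprM (prim_expr_order w_prim) !expr1n invr1 mulr1.
apply: contra_neq st => st1; apply/ord_inj/eqP.
rewrite -(modn_small (ltn_ord s)) -[X in _ == X](modn_small (ltn_ord t)).
rewrite -(eq_prim_root_expr w_prim).
by rewrite -[X in X == _](divfK (w0 t)) st1 mul1r.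
Qed.

Lemma circ_eigval_inversion (t : 'I_N) :
  \sum_(j < N) circ_eigval j * w ^- (t * j) = (t \in S)%:R * N%:R.
Proof.
under eq_bigr => j _ do rewrite mulr_suml.
rewrite exchange_big /=.
under eq_bigr => s _ do rewrite prim_root_orthogonality.
case: (boolP (t \in S)) => tS.
  rewrite (bigD1 t) //= eqxx big1 ?addr0 // => s /andP[_ /negbTE->].
  by rewrite mul0r.
rewrite big1 ?mul0r // => s sS.
by rewrite (_ : s == t = false) ?mul0r //; apply: contraNF tS => /eqP <-.
Qed.

Hypothesis eigval_int : forall j, circ_eigval j \in Num.int.

Lemma circ_eigval_coprime_mul a j : coprime a N -> circ_eigval (a * j) = circ_eigval j.
Proof.
move=> co; have [u uE] := Qn_aut_exists co.
have /intrP [z zE] := eigval_int j.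
have : u (circ_eigval j) = circ_eigval j by rewrite zE rmorph_int.
rewrite rmorph_sum /= => <-; apply: eq_bigr => s _.
by rewrite rmorphXn /= uE ?(prim_expr_order w_prim) // -exprM mulnCA.
Qed.

Lemma circ_unit_stable : unit_stable S.
Proof.
move=> a t co tS; have [b baE] := coprime_modinv co.
pose h (j : 'I_N) : 'I_N := inZp (a * j).
have h_inj : injective h.
  have baK j : j = b * (a * j) %[mod N] by rewrite mulnA -modnMml baE modnMml mul1n.
  move=> j1 j2 /(congr1 val) /= hj; apply/ord_inj.
  rewrite -(modn_small (ltn_ord j1)) -(modn_small (ltn_ord j2)) baK [RHS]baK.
  by rewrite -modnMmr hj modnMmr.
have expE (j : 'I_N) : w ^+ (t * h j) = w ^+ (h t * j).
  by apply/eqP; rewrite (eq_prim_root_expr w_prim) /= modnMmr modnMml mulnA (mulnC t).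
(* The inversion formula at [a t] is the one at [t], reindexed by [j |-> a j]. *)
have := circ_eigval_inversion t; rewrite tS mul1r (reindex_inj h_inj) /=.
under eq_bigr => j _ do rewrite expE circ_eigval_mod circ_eigval_coprime_mul //.
rewrite circ_eigval_inversion.
by case: (_ \in S) => //; rewrite mul0r => /esym/eqP; rewrite pnatr_eq0.
Qed.

End CirculantSpectrum.

Lemma integral_circ_unit_stable m (S : {set 'I_m.+1}) :
  integral_graph (circ_adjmx S) -> unit_stable S.
Proof.
move=> integral; have [w w_prim] := C_prim_root_exists (ltn0Sn m).
exact: circ_unit_stable w_prim (fun j => integral _ (circ_eigvalP S w_prim j)).
Qed.

Lemma connected_prime_cover m (S : {set 'I_m.+1}) : connected_graph (circ_adj S) ->
  forall p, p \in primes m.+1 -> exists2 s, s \in S & ~~ (p %| s).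
Proof.
move=> conn p; rewrite mem_primes => /and3P[p_pr _ pN].
have [/exists_inP[s sS nps]|] := boolP [exists s in S, ~~ (p %| s)]; first by exists s.
rewrite negb_exists_in => /forall_inP pS.
have N_gt1 : 1 < m.+1 := leq_trans (prime_gt1 p_pr) (dvdn_leq (ltn0Sn m) pN).
have closed_p : closed (circ_adj S) [pred i : 'I_m.+1 | p %| i].
  move=> i j /exists_inP[s /pS/negPn + /eqP sE].
  rewrite !inE -(dvdn_subr (ltnW (ltn_ord j)) pN) sE /zdiff /dvdn modn_dvdm //.
  exact: dvdn_add_eq.
have := closed_connect closed_p (conn ord0 (Ordinal N_gt1)).
by rewrite !inE dvdn0 dvdn1 => /esym/eqP p1; rewrite p1 in p_pr.
Qed.

Lemma totient_card_coprime q : 0 < q -> totient q = #|[set u : 'I_q | coprime q u]|.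
Proof.
move=> q0; rewrite totient_count_coprime big_mkord -sum1_card [RHS]big_mkcond /=.
by apply: eq_bigr => i _; rewrite inE; case: coprime.
Qed.

Lemma totient_partE n pi : 0 < n ->
  totient n`_pi = \prod_(p <- primes n | p \in pi) totient n`_p.
Proof.
move=> n0; rewrite totientE ?part_gt0 // primes_part big_filter.
rewrite big_seq_cond [RHS]big_seq_cond; apply: eq_bigr => p /andP[pP p_pi].
have [p_pr _ pn] := and3P (etrans (esym (mem_primes p n)) pP).
have logE : logn p n`_pi = logn p n.
  by rewrite -logn_part partn_part ?logn_part // => q; rewrite inE => /eqP->.
by rewrite logE p_part totient_pfactor // logn_gt0.
Qed.

Lemma sum_subn1_lt_prod (T : eqType) (r : seq T) (P : pred T) (F : T -> nat) :
  (forall x, x \in r -> 0 < F x) ->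
  \sum_(x <- r | P x) (F x - 1) < \prod_(x <- r | P x) F x.
Proof.
elim: r => [|x r IHr] F_gt0; first by rewrite !big_nil.
have IH := IHr (fun y yr => F_gt0 y (mem_behead (s := x :: r) yr)).
rewrite !big_cons; case: (P x) => //; have Fx := F_gt0 x (mem_head x r).
rewrite -(prednK Fx) mulSn subn1 /= addnC -addSn.
exact: leq_add IH (leq_pmulr _ (leq_ltn_trans (leq0n _) IH)).
Qed.

Section GcdClasses.
Variables (m : nat) (S : {set 'I_m.+1}).
Hypothesis S_stable : unit_stable S.
Local Notation N := m.+1.

Definition gcd_class d := [set t in S | gcdn t N == d].

Lemma gcd_class_card_ge s : s \in S ->
  totient N`_[pred p | ~~ (p %| gcdn s N)] <= #|gcd_class (gcdn s N)|.
Proof.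
move=> sS.
set d := gcdn s N; set pi := [pred p | ~~ (p %| d)].
set q := N`_pi; set q' := N`_pi^'.
have q0 : 0 < q := part_gt0 pi N.
have Nqq : q * q' = N by rewrite /q /q' partnC.
have co_qq' : coprime q q' by exact: coprime_partC.
have co_qd : coprime q d.
  apply: (pnat_coprime (part_pnat pi N)).
  by apply/pnatP => [|p pp pd]; rewrite ?gcdn_gt0 ?orbT // !inE pd.
have co_sq : coprime s q.
  rewrite coprime_sym /coprime -dvdn1 -(eqP co_qd) dvdn_gcd dvdn_gcdl /d.
  by rewrite dvdn_gcd dvdn_gcdr (dvdn_trans (dvdn_gcdl _ _) (dvdn_part _ _)).
(* Reduction mod q maps the class of s onto the units of Z/q: a unit u is the
   image of a s, where a = u / s (mod q) and a = 1 (mod q') by CRT. *)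
pose f (t : 'I_N) : 'I_q := Ordinal (ltn_pmod t q0).
rewrite totient_card_coprime //; apply: leq_trans (leq_imset_card f _).
apply/subset_leq_card/subsetP => u; rewrite inE => co_qu.
have [b bsE] := coprime_modinv co_sq.
set a := chinese q q' (b * u) 1.
have co_aN : coprime a N.
  rewrite -Nqq coprimeMr -coprime_modl /a chinese_modl // coprime_modl coprimeMl.
  rewrite coprime_sym in co_qu; rewrite co_qu andbT.
  rewrite -[coprime (chinese _ _ _ _) q']coprime_modl chinese_modr // coprime_modl coprime1n andbT.
  have : coprime (b * s) q by rewrite -coprime_modl bsE coprime_modl coprime1n.
  by rewrite coprimeMl => /andP[].
apply/imsetP; exists (inZp (a * s)).
  rewrite inE S_stable //= gcdn_modl gcdnC Gauss_gcdr 1?coprime_sym //.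
  by rewrite gcdnC.
apply: val_inj => /=.
have qN : q %| N by rewrite /q dvdn_part.
rewrite modn_dvdm // -modnMml /a chinese_modl // modnMml -mulnA.
by rewrite (mulnC u) mulnA -modnMml bsE modnMml mul1n modn_small.
Qed.

Lemma gcd_class_card_gt s : s \in S ->
  \sum_(p <- primes N | ~~ (p %| gcdn s N)) (totient N`_p - 1) < #|gcd_class (gcdn s N)|.
Proof.
move=> sS; apply: leq_trans (gcd_class_card_ge sS).
rewrite totient_partE //; apply: sum_subn1_lt_prod => p _.
by rewrite totient_gt0 part_gt0.
Qed.

Lemma card_gcd_classes : #|S| = \sum_(d < N.+1) #|gcd_class d|.
Proof.
rewrite -sum1_card (partition_big (fun t : 'I_N => inord (gcdn t N) : 'I_N.+1) predT) //=.
apply: eq_bigr => d _; rewrite -sum1_card; apply: eq_bigl => t; rewrite !inE.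
case: (t \in S) => //=.
by rewrite -(inj_eq val_inj) /= inordK // ltnS dvdn_leq // dvdn_gcdr.
Qed.

Hypothesis S_cover : forall p, p \in primes N -> exists2 s, s \in S & ~~ (p %| s).

Lemma sum_totient_ppart_le : \sum_(p <- primes N) (totient N`_p - 1) <= #|S|.
Proof.
pose nonempty (d : 'I_N.+1) := gcd_class d != set0.
have covered : \sum_(p <- primes N) (totient N`_p - 1) <=
    \sum_(p <- primes N) \sum_(d < N.+1 | nonempty d && ~~ (p %| d)) (totient N`_p - 1).
  rewrite big_seq [X in _ <= X]big_seq; apply: leq_sum => p /S_cover[s sS nps].
  have gcd_lt : gcdn s N < N.+1 by rewrite ltnS dvdn_leq // dvdn_gcdr.
  rewrite (bigD1 (inord (gcdn s N))) /= ?inordK ?leq_addr //.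
  apply/andP; split; first by apply/set0Pn; exists s; rewrite !inE sS inordK /=.
  by apply: contra nps => /dvdn_trans; apply; apply: dvdn_gcdl.
apply: leq_trans covered _; rewrite card_gcd_classes.
rewrite (exchange_big_dep nonempty) /=; last by move=> p d _ /andP[].
rewrite [X in _ <= X](bigID nonempty) /=; apply: leq_trans (leq_addr _ _).
apply: leq_sum => d ne_d; have /set0Pn[s] := ne_d; rewrite inE => /andP[sS /eqP sd].
rewrite (eq_bigl (fun p => ~~ (p %| d))) => [|p]; last by rewrite ne_d.
by rewrite -sd ltnW // gcd_class_card_gt.
Qed.

End GcdClasses.

Lemma sum_sorted_ltn_ge (s : seq nat) m : sorted ltn s -> all (leq m) s ->
  size s * (size s - 1) + 2 * m * size s <= 2 * \sum_(x <- s) x.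
Proof.
elim: s m => [|x s IHs] m /=; first by rewrite big_nil muln0.
move=> x_s /andP[mx ms]; rewrite big_cons.
have Sm_s : all (leq m.+1) s.
  by apply: sub_all (order_path_min ltn_trans x_s) => y; apply: leq_ltn_trans.
have := IHs m.+1 (path_sorted x_s) Sm_s; nia.
Qed.

Lemma totient_ppart_bounds n p : p \in primes n ->
  p.-1 <= totient n`_p /\ n`_p <= 2 * totient n`_p.
Proof.
move=> pP; have [p_pr _ _] := and3P (etrans (esym (mem_primes p n)) pP).
have e_gt0 : 0 < logn p n by rewrite logn_gt0.
rewrite p_part totient_pfactor // -{2}(prednK e_gt0) expnS.
have := prime_gt1 p_pr; have : 0 < p ^ (logn p n).-1 by rewrite expn_gt0 prime_gt0.
set q := p ^ _; split; nia.
Qed.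

Section OmegaBounds.
Variables (n k : nat).
Hypothesis sum_le : \sum_(p <- primes n) (totient n`_p - 1) <= k.

Lemma omega_sq_le : 0 < k -> size (primes n) * size (primes n) <= 4 * k.
Proof.
move=> k_gt0.
have primes_ge2 : all (leq 2) (primes n).
  by apply/allP => p; rewrite mem_primes => /and3P[/prime_gt1].
have := sum_sorted_ltn_ge (sorted_primes n) primes_ge2.
have : \sum_(p <- primes n) p <= \sum_(p <- primes n) (totient n`_p - 1 + 2).
  rewrite big_seq [X in _ <= X]big_seq; apply: leq_sum => p /totient_ppart_bounds[].
  lia.
rewrite big_split /= big_const_seq count_predT iter_addn_0.
move: sum_le; set w := size _; set A := \sum_(p <- _) p; set B := \sum_(p <- _) _.
nia.
Qed.

Lemma le_expn_omega : 2 <= k -> 0 < n -> n <= k ^ (3 * size (primes n)).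
Proof.
move=> k_ge2 n_gt0; have k3 : 2 * k + 2 <= k ^ 3 by rewrite !expnS expn0; nia.
rewrite {1}(prod_prime_decomp n_gt0) prime_decompE big_map /= expnM.
apply: (@leq_trans (\prod_(p <- primes n) k ^ 3)); last first.
  by rewrite big_const_seq count_predT iter_muln_1.
rewrite big_seq [X in _ <= X]big_seq; apply: leq_prod => p pP.
have [_ ppart_le] := totient_ppart_bounds pP.
have : totient n`_p - 1 <= k.
  by apply: leq_trans sum_le; rewrite (big_rem p pP) leq_addr.
rewrite -p_part; lia.
Qed.

End OmegaBounds.

Section RealBounds.
Local Open Scope R_scope.

Lemma ln_le x y : 0 < x -> x <= y -> ln x <= ln y.
Proof. by move=> x0 [xy|<-]; [apply/Rlt_le/ln_increasing | apply: Rle_refl]. Qed.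

Lemma ln_ge_1_sub_inv y : 0 < y -> 1 - / y <= ln y.
Proof.
move=> y0; have := exp_ineq1_le (ln (/ y)).
have iy : 0 < / y by apply: Rinv_0_lt_compat.
by rewrite exp_ln // ln_Rinv //; lra.
Qed.

Lemma ln_4_ge : 5 / 4 <= ln 4.
Proof.
have ln3 : 1 <= ln 3.
  by rewrite -{1}(ln_exp 1); apply: ln_le; [apply: exp_pos | apply: exp_le_3].
have ln43 := @ln_ge_1_sub_inv (4 / 3) ltac:(lra).
have -> : 4 = 3 * (4 / 3) by field.
rewrite ln_mult; lra.
Qed.

Lemma ln_ln_ge (k : nat) : (2 <= k)%nat -> 1 / 5 <= ln (ln (INR k + 2)).
Proof.
move=> k2; have k2R : 2 <= INR k by apply: (le_INR 2); apply/leP.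
have L : 5 / 4 <= ln (INR k + 2).
  by apply: Rle_trans ln_4_ge _; apply: ln_le; lra.
have := @ln_ge_1_sub_inv (ln (INR k + 2)) ltac:(lra).
have : / ln (INR k + 2) <= / (5 / 4) by apply: Rinv_le_contravar; lra.
lra.
Qed.

Lemma INR_expn (m n : nat) : INR (m ^ n) = INR m ^ n.
Proof. by elim: n => [|n IHn] //=; rewrite expnS mulnE mult_INR IHn. Qed.

Lemma pow_le_circ_bound (k w : nat) : (2 <= k)%nat -> (w * w <= 4 * k)%nat ->
  INR (k ^ (3 * w)) <= circ_bound 30 k.
Proof.
move=> k2 hw; have k2R : 2 <= INR k by apply: (le_INR 2); apply/leP.
have hwR : INR w * INR w <= 4 * INR k.
  by have := le_INR _ _ (elimT leP hw); rewrite !mulnE !mult_INR /=; lra.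
(* [circ_bound c k] is convertible to [Rpower (INR k) (c * sqrt (INR k * _))]. *)
rewrite INR_expn -Rpower_pow; last lra.
apply: Rle_Rpower; first lra.
rewrite mulnE mult_INR /=.
have L := ln_ln_ge k2.
have kL0 : 0 <= INR k * ln (ln (INR k + 2)) by nra.
have := sqrt_sqrt _ kL0; have := sqrt_pos (INR k * ln (ln (INR k + 2))).
set X := sqrt _ => X0 XX.
have w0 := pos_INR w.
nra.
Qed.
End RealBounds.

Theorem theorem2 :
  exists c : R, Rlt 0 c /\
    forall (k n : nat) (S : {set 'I_n}),
      2 <= k -> conn_set S -> #|S| = k ->
      connected_graph (circ_adj S) ->
      integral_graph (circ_adjmx S) ->
      Rle (INR n) (circ_bound c k).
Proof.
exists (30 : R); split; first lra.
move=> k [|m] S k_ge2 _ cardS conn integral.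
  by move: (max_card S); rewrite card_ord cardS leqn0 => /eqP k0; rewrite k0 in k_ge2.
have sum_le := sum_totient_ppart_le (integral_circ_unit_stable integral)
  (connected_prime_cover conn).
rewrite cardS in sum_le.
apply: Rle_trans (pow_le_circ_bound k_ge2 (omega_sq_le sum_le (ltnW k_ge2))).
exact/le_INR/leP/le_expn_omega.
Qed.
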